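(* Let $Q$ be a complete quiver and $j$ a mutable vertex which is cycle-preserving for $Q$ and is not the apex of a vortex subquiver of $Q$. Then every oriented 3-cycle in $\mu_j(Q)$ contains $j$, and $\mu_j(Q)$ is vortex-free.
   Context: A quiver is a finite directed multigraph with no loops and no oriented 2-cycles, whose vertex set is partitioned into mutable and frozen vertices; arrows between two frozen vertices are ignored. $b_{ik}$ = number of arrows $i\to k$ minus number of arrows $k\to i$; $Q|_S$ is the induced subquiver on $S$. Mutation $\mu_j$ at mutable $j$: for each path $i\to j\to k$ add $b_{ij}b_{jk}$ arrows $i\to k$, reverse all arrows at $j$, cancel 2-cycles. A quiver is complete if there is at least one arrow between every pair of vertices at least one of which is mutable. A 3-vertex (sub)quiver is an oriented 3-cycle if it has at most one frozen vertex and its underlying directed graph is not acyclic. A mutable vertex $j$ is cycle-preserving for $Q$ if whenever $Q|_{\{i,j,k\}}$ is an oriented 3-cycle containing $j$, so is $\mu_j(Q)|_{\{i,j,k\}}$. A vortex is a quiver on four vertices, at least three of them mutable, in which one vertex (the apex) is a source or a sink and the other three vertices support an oriented cycle. A vertex is the apex of a vortex in $Q$ if it is the apex of some 4-vertex induced subquiver which is a vortex; $Q$ is vortex-free if no 4-vertex induced subquiver is a vortex. *)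

From mathcomp Require Import all_boot all_order all_algebra.
Set Implicit Arguments. Unset Strict Implicit. Unset Printing Implicit Defensive.
Import Order.TTheory GRing.Theory Num.Theory.
Local Open Scope ring_scope.

(* A quiver on the finite vertex type T is given by a set [mut] of mutable
   vertices (the others are frozen) and its exchange matrix
   b i k = #(arrows i -> k) - #(arrows k -> i).  Since there are no loops and
   no oriented 2-cycles, the quiver is determined by b, which must be
   skew-symmetric.  Entries between two frozen vertices are ignored. *)
Definition skew_sym (T : finType) (b : T -> T -> int) : Prop :=
  forall i k, b k i = - b i k.

Definition arr (T : finType) (mut : {set T}) (b : T -> T -> int) (i k : T) : bool :=
  ((i \in mut) || (k \in mut)) && (0 < b i k).

Definition posp (x : int) : int := if 0 < x then x else 0.

Definition mutate (T : finType) (j : T) (b : T -> T -> int) : T -> T -> int :=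
  fun i k =>
    if (i == j) || (k == j) then - b i k
    else b i k + posp (b i j) * posp (b j k) - posp (- b i j) * posp (- b j k).

Definition complete (T : finType) (mut : {set T}) (b : T -> T -> int) : Prop :=
  forall i k, i != k -> (i \in mut) || (k \in mut) -> b i k != 0.

(* the underlying directed graph on three distinct vertices (no loops, no
   2-cycles) is not acyclic iff it contains a directed 3-cycle *)
Definition dcycle3 (T : finType) (mut : {set T}) (b : T -> T -> int) (i j k : T) : bool :=
  [&& arr mut b i j, arr mut b j k & arr mut b k i] ||
  [&& arr mut b j i, arr mut b k j & arr mut b i k].

Definition ocycle3 (T : finType) (mut : {set T}) (b : T -> T -> int) (i j k : T) : bool :=
  [&& i != j, j != k, i != k,
      (1 < (i \in mut) + (j \in mut) + (k \in mut))%N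
    & dcycle3 mut b i j k].

Definition cycle_preserving (T : finType) (mut : {set T}) (b : T -> T -> int) (j : T) : Prop :=
  forall i k, ocycle3 mut b i j k -> ocycle3 mut (mutate j b) i j k.

Definition vortex (T : finType) (mut : {set T}) (b : T -> T -> int) (a x y z : T) : bool :=
  [&& uniq [:: a; x; y; z],
      (2 < (a \in mut) + (x \in mut) + (y \in mut) + (z \in mut))%N,
      (* a is a source or a sink of the induced subquiver *)
      ~~ [|| arr mut b x a, arr mut b y a | arr mut b z a] ||
      ~~ [|| arr mut b a x, arr mut b a y | arr mut b a z]
    & dcycle3 mut b x y z].

Definition apex_of_vortex (T : finType) (mut : {set T}) (b : T -> T -> int) (a : T) : Prop :=
  exists x y z, vortex mut b a x y z.

Definition vortex_free (T : finType) (mut : {set T}) (b : T -> T -> int) : Prop :=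
  forall a x y z, ~~ vortex mut b a x y z.

From mathcomp Require Import all_boot all_order all_algebra ring.
Import Order.TTheory GRing.Theory Num.Theory.
Local Open Scope ring_scope.
Set Implicit Arguments. Unset Strict Implicit. Unset Printing Implicit Defensive.

(* Mutating at j changes an entry b i k (i, k <> j) only along a path
   through j, i.e. when one of i, k has an arrow into j and the other an
   arrow out of j.  Cycle preservation forces such a path i -> j -> k to
   produce an arrow i -> k in mu_j(Q).  Hence, going around an oriented
   3-cycle of mu_j(Q) avoiding j, all three vertices point the same way
   relative to j, so the cycle was already in Q with j as a common sink or
   source: a vortex with apex j.  And every oriented 3-cycle j -> p -> q -> j
   of mu_j(Q) sees any fourth vertex a both as a head and as a tail
   (j -> a -> q, or a -> j and p -> a), so a is not the apex of a vortex. *)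

Lemma posp_gt0 (x : int) : 0 < x -> posp x = x.
Proof. by rewrite /posp => ->. Qed.

Lemma posp_le0 (x : int) : x <= 0 -> posp x = 0.
Proof. by rewrite /posp ltNge => ->. Qed.

Lemma posp_mul_eq0 (x y : int) : x * y <= 0 -> posp x * posp y = 0.
Proof.
move=> xy; have [x_gt0|x_le0] := ltP 0 x; last by rewrite posp_le0 ?mul0r.
have [y_gt0|y_le0] := ltP 0 y; last by rewrite (posp_le0 y_le0) mulr0.
by have := mulr_gt0 x_gt0 y_gt0; rewrite ltNge xy.
Qed.

Section Mutation.

Variables (T : finType) (j : T) (b : T -> T -> int).

Lemma mutate_skew : skew_sym b -> skew_sym (mutate j b).
Proof.
move=> sk i k; rewrite /mutate orbC; case: ifP => _; first by rewrite sk.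
rewrite (sk i k) (sk i j) (sk j k) !opprK; ring.
Qed.

Lemma mutate_jv v : mutate j b j v = - b j v.
Proof. by rewrite /mutate eqxx. Qed.

Lemma mutate_vj v : mutate j b v j = - b v j.
Proof. by rewrite /mutate eqxx orbT. Qed.

Lemma mutate_no_path i k : i != j -> k != j -> b i j * b j k <= 0 ->
  mutate j b i k = b i k.
Proof.
move=> ij kj le0; rewrite /mutate (negbTE ij) (negbTE kj) posp_mul_eq0 //.
by rewrite posp_mul_eq0 ?mulrNN // addr0 subr0.
Qed.

Lemma mutate_path i k : i != j -> k != j -> 0 < b i j -> 0 < b j k ->
  mutate j b i k = b i k + b i j * b j k.
Proof.
move=> ij kj ij_gt0 jk_gt0; rewrite /mutate (negbTE ij) (negbTE kj).
rewrite (posp_gt0 ij_gt0) (posp_gt0 jk_gt0) (@posp_le0 (- b i j)) ?oppr_le0 ?ltW //.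
by rewrite mul0r subr0.
Qed.

End Mutation.

Lemma dcycle3_rot (T : finType) (mut : {set T}) (b : T -> T -> int) x y z :
  dcycle3 mut b x y z = dcycle3 mut b y z x.
Proof. by rewrite /dcycle3 andbC -andbA (andbC (arr _ _ y x)) -andbA. Qed.

Lemma vortex_rot (T : finType) (mut : {set T}) (b : T -> T -> int) a x y z :
  vortex mut b a x y z -> vortex mut b a y z x.
Proof.
case/and4P=> uniq_axyz cnt src cyc; apply/and4P; split.
- rewrite (perm_uniq (_ : perm_eq _ [:: a; x; y; z])) // perm_cons.
  by rewrite -[[:: y; z; x]]/(rot 1 [:: x; y; z]) perm_rot.
- by rewrite addnAC (addnAC (a \in mut)).
- move: src; rewrite [[|| arr _ _ x a, _ | _]]orbC [[|| arr _ _ a x, _ | _]]orbC.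
  by rewrite -!orbA.
- by rewrite -dcycle3_rot.
Qed.

Section CyclePreserving.

Variables (T : finType) (mut : {set T}) (b : T -> T -> int) (j : T).
Hypotheses (sk : skew_sym b) (cp : complete mut b) (jm : j \in mut).

Local Notation b' := (mutate j b).

Lemma bvj_neq0 v : v != j -> b v j != 0.
Proof. by move=> vj; apply: cp => //; rewrite jm orbT. Qed.

Lemma bjv_gt0 v : v != j -> (0 < b j v) = ~~ (0 < b v j).
Proof. by move=> vj; rewrite sk oppr_gt0; case: ltrgtP (bvj_neq0 vj). Qed.

Lemma arr_vj v : arr mut b v j = (0 < b v j).
Proof. by rewrite /arr jm orbT. Qed.

Lemma arr_jv v : v != j -> arr mut b j v = ~~ (0 < b v j).
Proof. by move=> vj; rewrite /arr jm bjv_gt0. Qed.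

Lemma arr_mutate_vj v : v != j -> arr mut b' v j = ~~ (0 < b v j).
Proof. by move=> vj; rewrite /arr jm orbT mutate_vj -sk bjv_gt0. Qed.

Lemma arr_mutate_jv v : arr mut b' j v = (0 < b v j).
Proof. by rewrite /arr jm mutate_jv -sk. Qed.

Lemma arr_mutate_same_side u v : u != j -> v != j ->
  (0 < b u j) = (0 < b v j) -> arr mut b' u v = arr mut b u v.
Proof.
move=> uj vj same; rewrite /arr mutate_no_path //.
rewrite (sk v j) mulrN oppr_le0.
have [uj_gt0|uj_le0] := ltP 0 (b u j); first by rewrite mulr_ge0 // ltW // -same.
by rewrite mulr_le0 // leNgt -same -leNgt.
Qed.

Hypothesis cpr : cycle_preserving mut b j.

Lemma mutate_path_gt0 i k : i != j -> k != j -> 0 < b i j -> 0 < b j k ->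
  (i \in mut) || (k \in mut) -> 0 < b' i k.
Proof.
move=> ij kj ij_gt0 jk_gt0 ik_mut.
have ik : i != k by apply: contraTneq jk_gt0 => <-; rewrite bjv_gt0 // ij_gt0.
have [ik_gt0|ik_lt0|ik0] := ltrgtP 0 (b i k).
- by rewrite mutate_path // addr_gt0 // mulr_gt0.
- have cyc : ocycle3 mut b i j k.
    rewrite /ocycle3 ij ik eq_sym kj jm /=; apply/andP; split.
      by case/orP: ik_mut => ->; case: (_ \in mut).
    apply/orP; left; rewrite arr_vj arr_jv // -bjv_gt0 // ij_gt0 jk_gt0.
    by rewrite /arr sk oppr_gt0 ik_lt0 orbC ik_mut.
  case/and5P: (cpr cyc) => _ _ _ _; rewrite /dcycle3 arr_mutate_vj // ij_gt0 /=.
  by case/and3P=> _ _ /andP[].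
- by move: (cp ik ik_mut); rewrite -ik0 eqxx.
Qed.

Lemma arr_mutate_side u v : u != j -> v != j ->
  arr mut b' u v -> (0 < b v j) ==> (0 < b u j).
Proof.
move=> uj vj /andP[uv_mut uv_gt0]; apply/implyP => vj_gt0.
apply/negPn/negP => uj_le0.
have := mutate_path_gt0 vj uj vj_gt0; rewrite bjv_gt0 // orbC.
move=> /(_ uj_le0 uv_mut).
by rewrite (mutate_skew j sk) oppr_gt0 ltNge ltW.
Qed.

Hypothesis j_not_apex : ~ apex_of_vortex mut b j.

Lemma ocycle3_mutate_mem i k l : ocycle3 mut b' i k l -> j \in [:: i; k; l].
Proof.
case/and5P=> ik kl il cnt cyc; apply/negPn/negP.
rewrite !inE !negb_or => /and3P[ji jk jl].
have [ij kj lj] : [/\ i != j, k != j & l != j] by rewrite ![_ == j]eq_sym.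
have side := arr_mutate_side.
have [e1 e2] : (0 < b i j) = (0 < b k j) /\ (0 < b k j) = (0 < b l j).
  case/orP: cyc => /and3P[a1 a2 a3].
  - move: (side _ _ ij kj a1) (side _ _ kj lj a2) (side _ _ lj ij a3).
    by case: (0 < b i j); case: (0 < b k j); case: (0 < b l j).
  - move: (side _ _ kj ij a1) (side _ _ lj kj a2) (side _ _ ij lj a3).
    by case: (0 < b i j); case: (0 < b k j); case: (0 < b l j).
have same := arr_mutate_same_side.
rewrite /dcycle3 !same // ?e1 ?e2 // in cyc.
apply: j_not_apex; exists i, k, l; apply/and4P; split => //.
- by rewrite /= !inE !negb_or ji jk jl ik il kl.
- by rewrite jm.
- by rewrite !arr_vj !arr_jv // -e2 -e1; case: (0 < b i j).
Qed.

Lemma arr_mutate_around a p q : a != j -> p != j -> q != j ->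
  (a \in mut) || (p \in mut) -> (a \in mut) || (q \in mut) ->
  arr mut b' j p -> arr mut b' q j ->
  (arr mut b' j a && arr mut b' a q) || (arr mut b' a j && arr mut b' p a).
Proof.
move=> aj pj qj ap aq; rewrite !arr_mutate_jv !arr_mutate_vj // => pj_gt0 qj_le0.
have [aj_gt0|aj_le0] /= := boolP (0 < b a j).
- by rewrite /arr aq mutate_path_gt0 // ?bjv_gt0.
- have pa : (p \in mut) || (a \in mut) by rewrite orbC.
  by rewrite /arr pa mutate_path_gt0 // ?bjv_gt0.
Qed.

Lemma mutate_no_vortex_on_j a y z : ~~ vortex mut b' a j y z.
Proof.
apply/negP; case/and4P=> uniq_ajyz cnt src.
move: uniq_ajyz; rewrite /= !inE !negb_or => /and3P[/and3P[aj _ _] /andP[jy jz] _].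
have [yj zj] : y != j /\ z != j by rewrite ![_ == j]eq_sym.
have [ay az] : ((a \in mut) || (y \in mut)) /\ ((a \in mut) || (z \in mut)).
  by move: cnt; case: (a \in mut); case: (y \in mut); case: (z \in mut); rewrite jm.
case/orP=> /and3P[jy' _ zj'].
- move: src; case/orP: (arr_mutate_around aj yj zj ay az jy' zj');
    by case/andP=> -> ->; rewrite !orbT.
- move: src; case/orP: (arr_mutate_around aj zj yj az ay zj' jy');
    by case/andP=> -> ->; rewrite !orbT.
Qed.

Lemma mutate_vortex_free : vortex_free mut b'.
Proof.
move=> a x y z; apply/negP => vx; have /and4P[uniq_axyz cnt _ cyc] := vx.
have /ocycle3_mutate_mem : ocycle3 mut b' x y z.
  move: uniq_axyz; rewrite /= !inE !negb_or => /and3P[_ /andP[xy xz] /andP[yz _]].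
  rewrite /ocycle3 xy yz xz cyc andbT /=.
  by move: cnt; case: (a \in mut); case: (x \in mut); case: (y \in mut);
    case: (z \in mut).
rewrite !inE => /or3P[] /eqP xyz_j.
- by move: vx; rewrite -xyz_j; apply/negP/mutate_no_vortex_on_j.
- by move/vortex_rot: vx; rewrite -xyz_j; apply/negP/mutate_no_vortex_on_j.
- by move/vortex_rot/vortex_rot: vx; rewrite -xyz_j; apply/negP/mutate_no_vortex_on_j.
Qed.

End CyclePreserving.

Theorem mainTheorem4 (T : finType) (mut : {set T}) (b : T -> T -> int)
  (j : T) :
  skew_sym b -> complete mut b -> j \in mut ->
  cycle_preserving mut b j -> ~ apex_of_vortex mut b j ->
  (forall i k l, ocycle3 mut (mutate j b) i k l -> j \in [:: i; k; l]) /\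
  vortex_free mut (mutate j b).
Proof.
move=> sk cp jm cpr j_not_apex.
by split; [exact: ocycle3_mutate_mem | exact: mutate_vortex_free].
Qed.
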